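(* Let $\delta > 0$ and $P > 0$, and let $\mathcal{X}$ be a $\delta$-spaced set of real numbers contained in $[-P,P]$. Let $I$ be a finite set, $\mathcal{Y} = \{y_i\}_{i \in I}$ a family of integers and $\{a_i\}_{i \in I}$ complex numbers. Then \[ \sum_{x \in \mathcal{X}} \Big| \sum_{i \in I} a_i e(x y_i) \Big|^2 \leq \pi \left( \mathrm{Card}(\mathcal{X})\, \Delta(\mathcal{Y}) + \frac{\mathrm{Card}(\mathcal{X})}{\delta} \right)^{1/2} (P+2)^{1/2} \, \sup_{k \in \mathbb{Z}} A_{\mathcal{Y}}(k)^{1/2} \, \|a\|^2 , \] where $\Delta(\mathcal{Y}) = \sup_{(i,j) \in I \times I} |y_i - y_j|$, $A_{\mathcal{Y}}(k)$ is the number of pairs $(i,j) \in I \times I$ with $y_i + y_j = k$, and $\|a\|^2 = \sum_{i \in I} |a_i|^2$.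
   Context: $e(z) = e^{2\pi i z}$. For $\delta > 0$, a $\delta$-spaced set of real numbers is a finite set $\mathcal{X}$ of distinct real numbers containing at least two elements such that $|x - x'| \geq \delta$ whenever $x, x'$ are distinct elements of $\mathcal{X}$. *)

From Stdlib Require Import Reals Lra Lia ZArith List.
Open Scope R_scope.

Definition Cpx := (R * R)%type.
Definition Cadd (z w : Cpx) : Cpx := (fst z + fst w, snd z + snd w).
Definition Cmul (z w : Cpx) : Cpx :=
  (fst z * fst w - snd z * snd w, fst z * snd w + snd z * fst w).
Definition C0 : Cpx := (0, 0).
Definition Cnorm2 (z : Cpx) : R := fst z ^ 2 + snd z ^ 2.

Definition e (t : R) : Cpx := (cos (2 * PI * t), sin (2 * PI * t)).

(* finite sums over the index set I = {0, ..., n-1} *)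
Definition Csum (n : nat) (f : nat -> Cpx) : Cpx :=
  fold_right (fun i acc => Cadd (f i) acc) C0 (seq 0 n).
Definition Rsum (n : nat) (f : nat -> R) : R :=
  fold_right (fun i acc => f i + acc) 0 (seq 0 n).
Definition Rsum_list (l : list R) (f : R -> R) : R :=
  fold_right (fun x acc => f x + acc) 0 l.

Definition delta_spaced (delta : R) (X : list R) : Prop :=
  NoDup X /\ (2 <= length X)%nat /\
  forall x x', In x X -> In x' X -> x <> x' -> delta <= Rabs (x - x').

Definition A_Y (n : nat) (y : nat -> Z) (k : Z) : nat :=
  length (filter (fun p => Z.eqb (y (fst p) + y (snd p))%Z k)
                 (list_prod (seq 0 n) (seq 0 n))).

Definition norm2 (n : nat) (a : nat -> Cpx) : R := Rsum n (fun i => Cnorm2 (a i)).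

(* Write S(x) = sum_i a_i e(x y_i) and N = Card X.  The proof has four steps.
   1. Cauchy-Schwarz over X gives (sum_x |S(x)|^2)^2 <= N * Q, Q = sum_x |S(x)|^4.
   2. S(x)^2 = sum_(i,j) a_i a_j e(x (y_i + y_j)).  Pairing Q against the
      coefficients a_i a_j and applying Cauchy-Schwarz over the pairs gives
      Q^2 <= ||a||^4 sup_k A_Y(k) sum_k |W(k)|^2, where W(k) = sum_x c_x e(x k),
      c_x is the conjugate of S(x)^2, and k ranges over a window of 2 Delta + 1
      consecutive integers containing every y_i + y_j.
   3. Dual large sieve: averaging the window over H shifts turns sum_k |W(k)|^2
      into a bilinear form in c whose kernel is a product of two Dirichlet
      kernels, bounded by min (H L, 4 / |e(t) - 1|^2).  A Schur test, together
      with a count of the delta-spaced points falling in each unit interval,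
      bounds it by Lambda * sum_x |c_x|^2 = Lambda * Q, where
      Lambda = (2P + 2) (2 Delta + H + 48 / (11 delta^2 H)).
   4. Taking H = ceil (2 / delta) yields Lambda <= pi^2 (Delta + 1/delta) (P + 2)
      when Delta >= 1; the case of a single frequency (Delta = 0) is direct. *)

From Stdlib Require Import Reals Lra Lia Psatz ZArith List Permutation.
From Stdlib Require Import Rtrigo_alt Ratan Factorial Setoid Morphisms.
Open Scope R_scope.

Definition RsumL {A : Type} (l : list A) (f : A -> R) : R :=
  fold_right (fun x acc => f x + acc) 0 l.
Definition CsumL {A : Type} (l : list A) (f : A -> Cpx) : Cpx :=
  fold_right (fun x acc => Cadd (f x) acc) C0 l.

Lemma RsumL_cons {A} (x : A) l f : RsumL (x :: l) f = f x + RsumL l f.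
Proof. reflexivity. Qed.

Lemma RsumL_app {A} (l1 l2 : list A) f : RsumL (l1 ++ l2) f = RsumL l1 f + RsumL l2 f.
Proof. unfold RsumL; induction l1 as [|x l1 IH]; cbn; [ring|]. rewrite IH; ring. Qed.

Lemma RsumL_ext {A} (l : list A) f g :
  (forall x, In x l -> f x = g x) -> RsumL l f = RsumL l g.
Proof.
  induction l as [|x l IH]; intros H; [reflexivity|].
  rewrite !RsumL_cons, H, IH; auto using in_eq, in_cons.
Qed.

#[global] Instance RsumL_proper {A} (l : list A) :
  Proper (pointwise_relation A eq ==> eq) (RsumL l).
Proof. intros f g Hfg. apply RsumL_ext; intros; apply Hfg. Qed.

Lemma RsumL_plus {A} (l : list A) f g :
  RsumL l (fun x => f x + g x) = RsumL l f + RsumL l g.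
Proof. unfold RsumL; induction l as [|x l IH]; cbn; [ring|]. rewrite IH; ring. Qed.

Lemma RsumL_minus {A} (l : list A) f g :
  RsumL l (fun x => f x - g x) = RsumL l f - RsumL l g.
Proof. unfold RsumL; induction l as [|x l IH]; cbn; [ring|]. rewrite IH; ring. Qed.

Lemma RsumL_scal {A} (l : list A) c f : RsumL l (fun x => c * f x) = c * RsumL l f.
Proof. unfold RsumL; induction l as [|x l IH]; cbn; [ring|]. rewrite IH; ring. Qed.

Lemma RsumL_scal_r {A} (l : list A) c f : RsumL l (fun x => f x * c) = RsumL l f * c.
Proof. unfold RsumL; induction l as [|x l IH]; cbn; [ring|]. rewrite IH; ring. Qed.

Lemma RsumL_const {A} (l : list A) c : RsumL l (fun _ => c) = INR (length l) * c.
Proof.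
  unfold RsumL; induction l as [|x l IH]; cbn [fold_right length]; [simpl; ring|].
  rewrite IH, S_INR; ring.
Qed.

Lemma RsumL_le {A} (l : list A) f g :
  (forall x, In x l -> f x <= g x) -> RsumL l f <= RsumL l g.
Proof.
  induction l as [|x l IH]; intros H; [apply Rle_refl|]. rewrite !RsumL_cons.
  apply Rplus_le_compat; auto using in_eq, in_cons.
Qed.

Lemma RsumL_nonneg {A} (l : list A) f : (forall x, In x l -> 0 <= f x) -> 0 <= RsumL l f.
Proof.
  intros H. replace 0 with (RsumL l (fun _ => 0)) by (rewrite RsumL_const; ring).
  apply RsumL_le; auto.
Qed.

Lemma RsumL_map {A B} (g : A -> B) (l : list A) f :
  RsumL (map g l) f = RsumL l (fun x => f (g x)).
Proof.
  induction l as [|x l IH]; [reflexivity|]. cbn [map]. rewrite !RsumL_cons, IH; reflexivity.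
Qed.

Lemma RsumL_swap {A B} (l1 : list A) (l2 : list B) f :
  RsumL l1 (fun x => RsumL l2 (fun y => f x y)) = RsumL l2 (fun y => RsumL l1 (fun x => f x y)).
Proof.
  induction l1 as [|x l1 IH].
  - change (0 = RsumL l2 (fun _ => 0)). rewrite RsumL_const; ring.
  - rewrite RsumL_cons, IH, <- RsumL_plus. reflexivity.
Qed.

Lemma RsumL_prod {A B} (l1 : list A) (l2 : list B) f :
  RsumL (list_prod l1 l2) f = RsumL l1 (fun x => RsumL l2 (fun y => f (x, y))).
Proof.
  induction l1 as [|x l1 IH]; [reflexivity|]. cbn [list_prod].
  rewrite RsumL_app, RsumL_map, IH, RsumL_cons. reflexivity.
Qed.

Lemma RsumL_perm {A} (l1 l2 : list A) f : Permutation l1 l2 -> RsumL l1 f = RsumL l2 f.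
Proof.
  induction 1; try reflexivity; try congruence.
  - rewrite !RsumL_cons, IHPermutation; reflexivity.
  - rewrite !RsumL_cons; ring.
Qed.

Lemma RsumL_incl {A} (l1 l2 : list A) f :
  NoDup l1 -> incl l1 l2 -> (forall x, In x l2 -> 0 <= f x) -> RsumL l1 f <= RsumL l2 f.
Proof.
  revert l2. induction l1 as [|a l1 IH]; intros l2 Hnd Hinc Hpos.
  - apply RsumL_nonneg; auto.
  - apply NoDup_cons_iff in Hnd as [Ha_l1 Hnd].
    destruct (in_split _ _ (Hinc a (in_eq a l1))) as [p [s ->]].
    rewrite (RsumL_perm (p ++ a :: s) (a :: p ++ s)) by (symmetry; apply Permutation_middle).
    rewrite !RsumL_cons. apply Rplus_le_compat_l, IH; auto.
    + intros z Hz. assert (Hz' : In z (p ++ a :: s)) by (apply Hinc, in_cons, Hz).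
      apply in_app_or in Hz'. apply in_or_app.
      destruct Hz' as [Hz'|[<-|Hz']]; auto. contradiction.
    + intros z Hz. apply Hpos. apply in_app_or in Hz. apply in_or_app.
      destruct Hz; auto using in_cons.
Qed.

Lemma RsumL_injective_le {A B} (l : list A) (K : list B) (phi : A -> B) (h : B -> R) :
  NoDup l -> (forall x1 x2, In x1 l -> In x2 l -> phi x1 = phi x2 -> x1 = x2) ->
  (forall x, In x l -> In (phi x) K) -> (forall k, In k K -> 0 <= h k) ->
  RsumL l (fun x => h (phi x)) <= RsumL K h.
Proof.
  intros Hnd Hinj Hin Hh. rewrite <- RsumL_map. apply RsumL_incl; auto.
  - apply NoDup_map_NoDup_ForallPairs; auto.
  - intros b Hb. apply in_map_iff in Hb as [x [<- Hx]]. auto.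
Qed.

(* Cauchy-Schwarz inequality for finite sums, via the discriminant of the
   nonnegative quadratic t |-> sum (f - t g)^2. *)
Lemma RsumL_CS {A} (l : list A) f g :
  (RsumL l (fun x => f x * g x)) ^ 2 <=
  RsumL l (fun x => f x ^ 2) * RsumL l (fun x => g x ^ 2).
Proof.
  set (a := RsumL l (fun x => f x ^ 2)). set (b := RsumL l (fun x => f x * g x)).
  set (c := RsumL l (fun x => g x ^ 2)).
  assert (Hquad : forall t, 0 <= a - 2 * t * b + t ^ 2 * c).
  { intros t. replace (a - 2 * t * b + t ^ 2 * c) with (RsumL l (fun x => (f x - t * g x) ^ 2)).
    - apply RsumL_nonneg. intros; apply pow2_ge_0.
    - unfold a, b, c. rewrite <- (RsumL_scal _ (2 * t)), <- (RsumL_scal _ (t ^ 2)),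
        <- RsumL_minus, <- RsumL_plus. apply RsumL_ext; intros; ring. }
  assert (Hc : 0 <= c) by (apply RsumL_nonneg; intros; apply pow2_ge_0).
  destruct (Req_dec c 0) as [Hc0|Hc0].
  - destruct (Req_dec b 0) as [Hb0|Hb0]; [rewrite Hb0; nra|].
    specialize (Hquad ((a + 1) / (2 * b))). rewrite Hc0 in Hquad.
    replace (a - 2 * ((a + 1) / (2 * b)) * b + ((a + 1) / (2 * b)) ^ 2 * 0) with (-1)
      in Hquad by (field; auto). lra.
  - specialize (Hquad (b / c)).
    replace (a - 2 * (b / c) * b + (b / c) ^ 2 * c) with ((a * c - b ^ 2) / c)
      in Hquad by (field; lra).
    assert (0 <= a * c - b ^ 2); [|lra].
    apply (Rmult_le_compat_r c) in Hquad; [|lra].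
    unfold Rdiv in Hquad. rewrite Rmult_assoc, Rinv_l in Hquad by lra. lra.
Qed.

Lemma RsumL_sq_le {A} (l : list A) f :
  (RsumL l f) ^ 2 <= INR (length l) * RsumL l (fun x => f x ^ 2).
Proof.
  pose proof (RsumL_CS l (fun _ => 1) f) as H. cbv beta in H.
  rewrite (RsumL_ext l (fun x => 1 * f x) f), (RsumL_ext l (fun _ => 1 ^ 2) (fun _ => 1)),
    RsumL_const, Rmult_1_r in H by (intros; ring).
  exact H.
Qed.

Definition Cconj (z : Cpx) : Cpx := (fst z, - snd z).
(* real inner product of C = R^2, i.e. Re (z * conj w) *)
Definition dot (z w : Cpx) : R := fst z * fst w + snd z * snd w.
Definition Cabs (z : Cpx) : R := sqrt (Cnorm2 z).
Definition C1 : Cpx := (1, 0).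
Definition Csub (z w : Cpx) : Cpx := (fst z - fst w, snd z - snd w).

Lemma Cext (z w : Cpx) : fst z = fst w -> snd z = snd w -> z = w.
Proof. destruct z, w; cbn; intros -> ->; reflexivity. Qed.

Lemma fst_CsumL {A} (l : list A) f : fst (CsumL l f) = RsumL l (fun x => fst (f x)).
Proof. induction l as [|x l IH]; [reflexivity|]. simpl. rewrite IH. reflexivity. Qed.
Lemma snd_CsumL {A} (l : list A) f : snd (CsumL l f) = RsumL l (fun x => snd (f x)).
Proof. induction l as [|x l IH]; [reflexivity|]. simpl. rewrite IH. reflexivity. Qed.

Lemma CsumL_ext {A} (l : list A) f g :
  (forall x, In x l -> f x = g x) -> CsumL l f = CsumL l g.
Proof.
  intros H; apply Cext; rewrite ?fst_CsumL, ?snd_CsumL; apply RsumL_ext;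
    intros; rewrite H; auto.
Qed.

#[global] Instance CsumL_proper {A} (l : list A) :
  Proper (pointwise_relation A eq ==> eq) (CsumL l).
Proof. intros f g Hfg. apply CsumL_ext; intros; apply Hfg. Qed.

Lemma CsumL_prod {A B} (l1 : list A) (l2 : list B) f :
  CsumL (list_prod l1 l2) f = CsumL l1 (fun x => CsumL l2 (fun y => f (x, y))).
Proof.
  apply Cext; rewrite ?fst_CsumL, ?snd_CsumL, RsumL_prod; apply RsumL_ext; intros;
    rewrite ?fst_CsumL, ?snd_CsumL; reflexivity.
Qed.

Lemma CsumL_map {A B} (g : A -> B) (l : list A) f :
  CsumL (map g l) f = CsumL l (fun x => f (g x)).
Proof. apply Cext; rewrite ?fst_CsumL, ?snd_CsumL, RsumL_map; reflexivity. Qed.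

Lemma Cmul_CsumL_r {A} (l : list A) f z : Cmul z (CsumL l f) = CsumL l (fun x => Cmul z (f x)).
Proof.
  apply Cext; unfold Cmul; cbn [fst snd]; rewrite ?fst_CsumL, ?snd_CsumL, <- !RsumL_scal;
    [rewrite <- RsumL_minus | rewrite <- RsumL_plus]; reflexivity.
Qed.

Lemma Cmul_CsumL_l {A} (l : list A) f z : Cmul (CsumL l f) z = CsumL l (fun x => Cmul (f x) z).
Proof.
  apply Cext; unfold Cmul; cbn [fst snd]; rewrite ?fst_CsumL, ?snd_CsumL, <- !RsumL_scal_r;
    [rewrite <- RsumL_minus | rewrite <- RsumL_plus]; reflexivity.
Qed.

Lemma dot_CsumL_l {A} (l : list A) f w : dot (CsumL l f) w = RsumL l (fun x => dot (f x) w).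
Proof.
  unfold dot. rewrite fst_CsumL, snd_CsumL, <- !RsumL_scal_r, <- RsumL_plus. reflexivity.
Qed.

Lemma dot_CsumL_r {A} (l : list A) f w : dot w (CsumL l f) = RsumL l (fun x => dot w (f x)).
Proof.
  unfold dot. rewrite fst_CsumL, snd_CsumL, <- !RsumL_scal, <- RsumL_plus. reflexivity.
Qed.

Lemma dot_conj u b z : dot u (Cmul b z) = dot (Cconj b) (Cmul (Cconj u) z).
Proof. unfold dot, Cmul, Cconj; cbn. ring. Qed.

Lemma Cnorm2_nonneg z : 0 <= Cnorm2 z.
Proof. unfold Cnorm2. nra. Qed.

Lemma Cnorm2_mul z w : Cnorm2 (Cmul z w) = Cnorm2 z * Cnorm2 w.
Proof. destruct z, w; unfold Cnorm2, Cmul; cbn; ring. Qed.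

Lemma Cnorm2_conj z : Cnorm2 (Cconj z) = Cnorm2 z.
Proof. destruct z; unfold Cnorm2, Cconj; cbn; ring. Qed.

Lemma Cnorm2_dot z : Cnorm2 z = dot z z.
Proof. destruct z; unfold Cnorm2, dot; cbn; ring. Qed.

Lemma Cnorm2_CsumL {A} (l : list A) f :
  Cnorm2 (CsumL l f) = RsumL l (fun x => RsumL l (fun x' => dot (f x) (f x'))).
Proof. rewrite Cnorm2_dot, dot_CsumL_l. apply RsumL_ext; intros. apply dot_CsumL_r. Qed.

Lemma Cnorm2_CsumL_le {A} (l : list A) f :
  Cnorm2 (CsumL l f) <= INR (length l) * RsumL l (fun x => Cnorm2 (f x)).
Proof.
  unfold Cnorm2 at 1. rewrite fst_CsumL, snd_CsumL.
  pose proof (RsumL_sq_le l (fun x => fst (f x))).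
  pose proof (RsumL_sq_le l (fun x => snd (f x))).
  unfold Cnorm2. rewrite RsumL_plus. lra.
Qed.

Lemma Cabs_nonneg z : 0 <= Cabs z.
Proof. apply sqrt_pos. Qed.

Lemma Cabs_sq z : Cabs z * Cabs z = Cnorm2 z.
Proof. apply sqrt_sqrt, Cnorm2_nonneg. Qed.

Lemma Cabs_pow2 z : Cabs z ^ 2 = Cnorm2 z.
Proof. rewrite <- Cabs_sq. ring. Qed.

Lemma Cabs_mul z w : Cabs (Cmul z w) = Cabs z * Cabs w.
Proof. unfold Cabs. rewrite Cnorm2_mul. apply sqrt_mult; apply Cnorm2_nonneg. Qed.

Lemma Cabs_conj z : Cabs (Cconj z) = Cabs z.
Proof. unfold Cabs; rewrite Cnorm2_conj; reflexivity. Qed.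

Lemma dot_le z w : dot z w <= Cabs z * Cabs w.
Proof.
  destruct z as [a b], w as [c d]; unfold dot, Cabs, Cnorm2; cbn [fst snd].
  replace (a ^ 2 + b ^ 2) with (a² + b²) by (unfold Rsqr; ring).
  replace (c ^ 2 + d ^ 2) with (c² + d²) by (unfold Rsqr; ring).
  apply sqrt_cauchy.
Qed.

(** * The characters e(t) *)

Lemma e_norm t : Cnorm2 (e t) = 1.
Proof.
  unfold Cnorm2, e; cbn [fst snd].
  pose proof (sin2_cos2 (2 * PI * t)) as H. unfold Rsqr in H. lra.
Qed.

Lemma e_zero : e 0 = C1.
Proof. unfold e, C1. rewrite Rmult_0_r, cos_0, sin_0. reflexivity. Qed.

Lemma e_mul a b : Cmul (e a) (e b) = e (a + b).
Proof.
  unfold Cmul, e; cbn. replace (2 * PI * (a + b)) with (2 * PI * a + 2 * PI * b) by ring.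
  rewrite cos_plus, sin_plus. f_equal; ring.
Qed.

Lemma dot_Cmul_e c c' a b : dot (Cmul c (e a)) (Cmul c' (e b)) = dot c (Cmul c' (e (b - a))).
Proof.
  unfold dot, Cmul, e; cbn. replace (2 * PI * (b - a)) with (2 * PI * b - 2 * PI * a) by ring.
  rewrite cos_minus, sin_minus. ring.
Qed.

(** * The squared chord |e(t) - 1|^2 = 2 - 2 cos (2 pi t) *)

Ltac eval_factorials := rewrite !INR_IZR_INZ;
  repeat match goal with |- context [Z.of_nat (fact ?n)] =>
    let v := eval vm_compute in (Z.of_nat (fact n)) in change (Z.of_nat (fact n)) with v end.

Lemma cos_approx_4 a : cos_approx a 4 = 1 - a^2/2 + a^4/24 - a^6/720 + a^8/40320.
Proof.
  unfold cos_approx, cos_term. cbn [sum_f_R0]. eval_factorials. cbn [Nat.mul Nat.add]. field.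
Qed.

Lemma sin_lb_eq a : sin_lb a = a - a^3/6 + a^5/120 - a^7/5040.
Proof.
  unfold sin_lb, sin_approx, sin_term. cbn [sum_f_R0]. eval_factorials.
  cbn [Nat.mul Nat.add]. field.
Qed.

Lemma PI_gt_3 : 3 < PI.
Proof. pose proof PI2_3_2. lra. Qed.

(* cos (8/5) < 0 by its Taylor upper bound, so pi/2 < 8/5. *)
Lemma PI_lt_16_5 : PI < 16/5.
Proof.
  destruct (Rlt_le_dec PI (16/5)) as [Hlt|Hge]; auto. exfalso.
  assert (Hcos : 0 <= cos (8/5)) by (apply cos_ge_0; lra).
  destruct (pre_cos_bound (8/5) 1) as [_ Hub]; try lra.
  cbn [Nat.mul Nat.add] in Hub. rewrite cos_approx_4 in Hub. lra.
Qed.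

Definition chord2 (t : R) : R := 2 - 2 * cos (2 * PI * t).

Lemma chord2_nonneg t : 0 <= chord2 t.
Proof. unfold chord2. pose proof (COS_bound (2 * PI * t)). lra. Qed.

Lemma chord2_even t : chord2 (- t) = chord2 t.
Proof.
  unfold chord2. replace (2 * PI * - t) with (- (2 * PI * t)) by ring. rewrite cos_neg; auto.
Qed.

Lemma chord2_period_nat t (k : nat) : chord2 (t + INR k) = chord2 t.
Proof.
  unfold chord2. replace (2 * PI * (t + INR k)) with (2 * PI * t + 2 * INR k * PI) by ring.
  rewrite cos_period; auto.
Qed.

Lemma chord2_period t (j : Z) : chord2 (t - IZR j) = chord2 t.
Proof.
  destruct (Z_le_gt_dec 0 j).
  - rewrite <- (chord2_period_nat (t - IZR j) (Z.to_nat j)), INR_IZR_INZ, Z2Nat.id by lia.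
    f_equal; ring.
  - rewrite <- (chord2_period_nat t (Z.to_nat (- j))), INR_IZR_INZ, Z2Nat.id, opp_IZR by lia.
    f_equal; ring.
Qed.

(* Jordan-type bound: 4 sin^2 (pi v) >= 11 v^2 on [0, 1/2], from
   sin a >= (4/7) a on [0, 8/5] (Taylor lower bound of degree 7). *)
Lemma chord2_lower_pos v : 0 <= v <= 1/2 -> 11 * v ^ 2 <= chord2 v.
Proof.
  intros Hv. pose proof PI_gt_3. pose proof PI_lt_16_5.
  unfold chord2. replace (2 * PI * v) with (2 * (PI * v)) by ring. rewrite cos_2a_sin.
  set (a := PI * v).
  assert (Ha : 0 <= a <= 8/5) by (unfold a; nra).
  destruct (SIN a) as [Hsin _]; try lra. rewrite sin_lb_eq in Hsin.
  assert (Hlin : 4/7 * a <= sin a).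
  { assert (0 <= a ^ 5 / 120 - a ^ 7 / 5040).
    { replace (a ^ 5 / 120 - a ^ 7 / 5040) with (a ^ 5 * (42 - a ^ 2) / 5040) by field.
      apply Rmult_le_pos; [|lra]. apply Rmult_le_pos; [apply pow_le; lra|nra]. }
    nra. }
  assert (Hsq : 16/49 * a ^ 2 <= sin a * sin a).
  { assert (Hpos : 0 <= 4/7 * a) by lra.
    pose proof (Rmult_le_compat _ _ _ _ Hpos Hpos Hlin Hlin). lra. }
  assert (Ha2 : 9 * v ^ 2 <= a ^ 2).
  { unfold a. replace ((PI * v) ^ 2) with (PI ^ 2 * v ^ 2) by ring.
    apply Rmult_le_compat_r; nra. }
  pose proof (pow2_ge_0 v). lra.
Qed.

Lemma chord2_lower u : -1/2 <= u <= 1/2 -> 11 * u ^ 2 <= chord2 u.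
Proof.
  intros Hu. destruct (Rle_lt_dec 0 u).
  - apply chord2_lower_pos; lra.
  - rewrite <- chord2_even. replace (u ^ 2) with ((- u) ^ 2) by ring.
    apply chord2_lower_pos; lra.
Qed.

Lemma Cnorm2_e_sub_1 t : Cnorm2 (Csub (e t) C1) = chord2 t.
Proof.
  unfold Cnorm2, Csub, e, C1, chord2; cbn [fst snd].
  pose proof (sin2_cos2 (2 * PI * t)) as H. unfold Rsqr in H. nra.
Qed.

(** * Dirichlet kernels D_M(t) = sum_(l < M) e(l t) *)

Definition D (M : nat) (t : R) : Cpx := CsumL (seq 0 M) (fun l => e (t * INR l)).

Lemma D_S M t : D (S M) t = Cadd C1 (Cmul (e t) (D M t)).
Proof.
  unfold D. rewrite <- cons_seq, <- seq_shift. cbn [CsumL fold_right].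
  change (fold_right (fun x acc => Cadd (e (t * INR x)) acc) C0 (map S (seq 0 M)))
    with (CsumL (map S (seq 0 M)) (fun x => e (t * INR x))).
  rewrite CsumL_map, Cmul_CsumL_r, Rmult_0_r, e_zero. f_equal.
  apply CsumL_ext. intros. rewrite e_mul, S_INR. f_equal; ring.
Qed.

Lemma D_geometric M t : Cmul (D M t) (Csub (e t) C1) = Csub (e (t * INR M)) C1.
Proof.
  induction M as [|M IH].
  - cbn [INR]. rewrite Rmult_0_r, e_zero.
    unfold D, C1, Csub, Cmul, C0; cbn. f_equal; ring.
  - rewrite D_S, S_INR.
    transitivity (Cadd (Csub (e t) C1) (Cmul (e t) (Cmul (D M t) (Csub (e t) C1)))).
    + destruct (D M t), (e t). unfold Cadd, Cmul, Csub, C1; cbn. f_equal; ring.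
    + rewrite IH. replace (t * (INR M + 1)) with (t + t * INR M) by ring. rewrite <- e_mul.
      destruct (e t), (e (t * INR M)). unfold Cadd, Cmul, Csub, C1; cbn. f_equal; ring.
Qed.

Lemma D_trivial_bound M t : Cnorm2 (D M t) <= INR M ^ 2.
Proof.
  unfold D. eapply Rle_trans; [apply Cnorm2_CsumL_le|].
  setoid_rewrite e_norm. rewrite RsumL_const, length_seq. lra.
Qed.

Lemma D_chord_bound M t : Cnorm2 (D M t) * chord2 t <= 4.
Proof.
  rewrite <- Cnorm2_e_sub_1, <- Cnorm2_mul, D_geometric, Cnorm2_e_sub_1. unfold chord2.
  pose proof (COS_bound (2 * PI * (t * INR M))). lra.
Qed.

Definition zrange (a : Z) (n : nat) : list Z := map (fun i => (a + Z.of_nat i)%Z) (seq 0 n).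

Lemma In_zrange a n z : In z (zrange a n) <-> (a <= z < a + Z.of_nat n)%Z.
Proof.
  unfold zrange. rewrite in_map_iff. split.
  - intros [i [<- Hi]]. apply in_seq in Hi. lia.
  - intros H. exists (Z.to_nat (z - a)). split; [lia|]. apply in_seq. lia.
Qed.

Lemma NoDup_zrange a n : NoDup (zrange a n).
Proof.
  apply NoDup_map_NoDup_ForallPairs; [|apply seq_NoDup]. intros i j _ _ H. lia.
Qed.

Lemma length_zrange a n : length (zrange a n) = n.
Proof. unfold zrange; rewrite length_map, length_seq; reflexivity. Qed.

Fixpoint sym_range (M : nat) : list Z :=
  match M with
  | O => 0%Z :: nil
  | S M' => Z.of_nat (S M') :: (- Z.of_nat (S M'))%Z :: sym_range M'
  end.

Lemma In_sym_range M z : (Z.abs z <= Z.of_nat M)%Z -> In z (sym_range M).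
Proof.
  induction M as [|M IH]; intros H; cbn [sym_range].
  - left. lia.
  - destruct (Z.eq_dec z (Z.of_nat (S M))); [left; lia|].
    destruct (Z.eq_dec z (- Z.of_nat (S M))); [right; left; lia|].
    right; right. apply IH. lia.
Qed.


(** * Windows of frequencies and their kernel *)

Definition dual_sum (X : list R) (c : R -> Cpx) (k : Z) : Cpx :=
  CsumL X (fun x => Cmul (c x) (e (x * IZR k))).

(* the s-th of H windows of length L; for L = m + H they all contain {lo, ..., lo + m} *)
Definition shifted_window (lo : Z) (H L s : nat) : list Z :=
  zrange (lo - Z.of_nat H + 1 + Z.of_nat s) L.

Definition window_kernel (lo : Z) (H L : nat) (t : R) : Cpx :=
  CsumL (seq 0 H) (fun s => CsumL (shifted_window lo H L s) (fun k => e (t * IZR k))).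

(* each of the H shifted windows contains the central window *)
Lemma window_average (f : Z -> R) lo m H : (forall k, 0 <= f k) ->
  INR H * RsumL (zrange lo (S m)) f
  <= RsumL (seq 0 H) (fun s => RsumL (shifted_window lo H (m + H) s) f).
Proof.
  intros Hf. rewrite <- (length_seq H 0) at 1. rewrite <- RsumL_const.
  apply RsumL_le. intros s Hs. apply in_seq in Hs.
  apply RsumL_incl; [apply NoDup_zrange| |auto].
  intros k Hk. apply In_zrange in Hk. apply In_zrange. lia.
Qed.

Lemma window_sum_expand (X : list R) c lo (H L : nat) :
  RsumL (seq 0 H) (fun s => RsumL (shifted_window lo H L s) (fun k => Cnorm2 (dual_sum X c k))) =
  RsumL X (fun x => RsumL X (fun x' => dot (c x) (Cmul (c x') (window_kernel lo H L (x' - x))))).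
Proof.
  unfold dual_sum, window_kernel.
  setoid_rewrite Cnorm2_CsumL. setoid_rewrite dot_Cmul_e.
  setoid_rewrite Cmul_CsumL_r. setoid_rewrite dot_CsumL_r.
  setoid_rewrite Cmul_CsumL_r. setoid_rewrite dot_CsumL_r.
  setoid_rewrite (RsumL_swap (shifted_window lo H L _) X).
  rewrite RsumL_swap. apply RsumL_ext; intros x _.
  setoid_rewrite (RsumL_swap (shifted_window lo H L _) X).
  rewrite RsumL_swap. apply RsumL_ext; intros x' _.
  apply RsumL_ext; intros s _. apply RsumL_ext; intros k _.
  do 3 f_equal. ring.
Qed.

Lemma window_kernel_factor lo H L t :
  window_kernel lo H L t = Cmul (e (t * IZR (lo - Z.of_nat H + 1))) (Cmul (D H t) (D L t)).
Proof.
  unfold window_kernel, shifted_window, zrange, D.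
  rewrite Cmul_CsumL_l, Cmul_CsumL_r. apply CsumL_ext; intros s _.
  rewrite CsumL_map, Cmul_CsumL_r, Cmul_CsumL_r. apply CsumL_ext; intros l _.
  rewrite !e_mul. f_equal. rewrite !plus_IZR, <- !INR_IZR_INZ. ring.
Qed.

Lemma window_kernel_norm2 lo H L t :
  Cnorm2 (window_kernel lo H L t) = Cnorm2 (D H t) * Cnorm2 (D L t).
Proof. rewrite window_kernel_factor, !Cnorm2_mul, e_norm. ring. Qed.

Lemma window_kernel_trivial_bound lo H L t : Cabs (window_kernel lo H L t) <= INR H * INR L.
Proof.
  unfold Cabs. rewrite window_kernel_norm2.
  pose proof (D_trivial_bound H t). pose proof (D_trivial_bound L t).
  pose proof (Cnorm2_nonneg (D H t)). pose proof (Cnorm2_nonneg (D L t)).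
  pose proof (pos_INR H). pose proof (pos_INR L).
  rewrite <- (sqrt_pow2 (INR H * INR L)) by nra. apply sqrt_le_1_alt.
  replace ((INR H * INR L) ^ 2) with (INR H ^ 2 * INR L ^ 2) by ring.
  apply Rmult_le_compat; auto.
Qed.

Lemma window_kernel_chord_bound lo H L t : Cabs (window_kernel lo H L t) * chord2 t <= 4.
Proof.
  unfold Cabs. rewrite window_kernel_norm2.
  pose proof (D_chord_bound H t). pose proof (D_chord_bound L t).
  pose proof (Cnorm2_nonneg (D H t)). pose proof (Cnorm2_nonneg (D L t)).
  pose proof (chord2_nonneg t).
  rewrite <- (sqrt_pow2 (chord2 t)), <- sqrt_mult, <- (sqrt_pow2 4) by nra.
  apply sqrt_le_1_alt.
  replace (Cnorm2 (D H t) * Cnorm2 (D L t) * chord2 t ^ 2)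
    with ((Cnorm2 (D H t) * chord2 t) * (Cnorm2 (D L t) * chord2 t)) by ring.
  replace (4 ^ 2) with (4 * 4) by ring.
  apply Rmult_le_compat; auto; apply Rmult_le_pos; auto.
Qed.

Lemma schur_test (X : list R) (c : R -> Cpx) (g : R -> R) (F : R -> Cpx) Row :
  (forall t, Cabs (F t) <= g t) ->
  (forall x, In x X -> RsumL X (fun x' => g (x' - x)) <= Row) ->
  (forall x', In x' X -> RsumL X (fun x => g (x' - x)) <= Row) ->
  RsumL X (fun x => RsumL X (fun x' => dot (c x) (Cmul (c x') (F (x' - x)))))
  <= Row * RsumL X (fun x => Cnorm2 (c x)).
Proof.
  intros HF Hrow Hcol.
  assert (Hg0 : forall t, 0 <= g t) by (intros t; eapply Rle_trans; [apply Cabs_nonneg|apply HF]).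
  assert (Hterm : forall x x', dot (c x) (Cmul (c x') (F (x' - x)))
            <= Cnorm2 (c x) * g (x' - x) / 2 + Cnorm2 (c x') * g (x' - x) / 2).
  { intros x x'. eapply Rle_trans; [apply dot_le|]. rewrite Cabs_mul, <- !Cabs_sq.
    pose proof (Cabs_nonneg (c x)). pose proof (Cabs_nonneg (c x')).
    pose proof (HF (x' - x)). pose proof (Hg0 (x' - x)).
    assert (Hprod : Cabs (c x) * (Cabs (c x') * Cabs (F (x' - x)))
                    <= Cabs (c x) * Cabs (c x') * g (x' - x)).
    { rewrite <- Rmult_assoc. apply Rmult_le_compat_l; auto. apply Rmult_le_pos; auto. }
    assert (0 <= (Cabs (c x) - Cabs (c x')) ^ 2 * g (x' - x))
      by (apply Rmult_le_pos; auto; apply pow2_ge_0).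
    nra. }
  assert (Hrows : forall x, In x X ->
            RsumL X (fun x' => Cnorm2 (c x) * g (x' - x) / 2) <= Cnorm2 (c x) * (Row / 2)).
  { intros x Hx. rewrite (RsumL_ext _ _ (fun x' => Cnorm2 (c x) / 2 * g (x' - x)))
      by (intros; unfold Rdiv; ring).
    rewrite RsumL_scal. pose proof (Cnorm2_nonneg (c x)).
    replace (Cnorm2 (c x) * (Row / 2)) with (Cnorm2 (c x) / 2 * Row) by (unfold Rdiv; ring).
    apply Rmult_le_compat_l; auto; lra. }
  assert (Hcols : forall x', In x' X ->
            RsumL X (fun x => Cnorm2 (c x') * g (x' - x) / 2) <= Cnorm2 (c x') * (Row / 2)).
  { intros x' Hx'. rewrite (RsumL_ext _ _ (fun x => Cnorm2 (c x') / 2 * g (x' - x)))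
      by (intros; unfold Rdiv; ring).
    rewrite RsumL_scal. pose proof (Cnorm2_nonneg (c x')).
    replace (Cnorm2 (c x') * (Row / 2)) with (Cnorm2 (c x') / 2 * Row) by (unfold Rdiv; ring).
    apply Rmult_le_compat_l; auto; lra. }
  eapply Rle_trans.
  { apply RsumL_le; intros x _. apply RsumL_le; intros x' _. apply Hterm. }
  rewrite (RsumL_ext X _ (fun x =>
    RsumL X (fun x' => Cnorm2 (c x) * g (x' - x) / 2) +
    RsumL X (fun x' => Cnorm2 (c x') * g (x' - x) / 2))) by (intros; apply RsumL_plus).
  rewrite RsumL_plus, (RsumL_swap X X (fun x x' => Cnorm2 (c x') * g (x' - x) / 2)).
  eapply Rle_trans; [apply Rplus_le_compat; apply RsumL_le; [exact Hrows|exact Hcols]|].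
  rewrite RsumL_scal_r. lra.
Qed.

Definition expsum (n : nat) (a : nat -> Cpx) (y : nat -> Z) (x : R) : Cpx :=
  CsumL (seq 0 n) (fun i => Cmul (a i) (e (x * IZR (y i)))).
Definition pairs (n : nat) : list (nat * nat) := list_prod (seq 0 n) (seq 0 n).
Definition pair_coef (a : nat -> Cpx) (p : nat * nat) : Cpx := Cmul (a (fst p)) (a (snd p)).
Definition pair_freq (y : nat -> Z) (p : nat * nat) : Z := (y (fst p) + y (snd p))%Z.

Lemma norm2_nonneg n a : 0 <= norm2 n a.
Proof. apply RsumL_nonneg. intros; apply Cnorm2_nonneg. Qed.

Lemma expsum_square n a y x :
  Cmul (expsum n a y x) (expsum n a y x)
  = CsumL (pairs n) (fun p => Cmul (pair_coef a p) (e (x * IZR (pair_freq y p)))).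
Proof.
  unfold expsum, pairs. rewrite Cmul_CsumL_l, CsumL_prod. apply CsumL_ext; intros i _.
  rewrite Cmul_CsumL_r. apply CsumL_ext; intros j _. unfold pair_coef, pair_freq; cbn [fst snd].
  rewrite plus_IZR, Rmult_plus_distr_l, <- e_mul.
  destruct (a i), (a j), (e (x * IZR (y i))), (e (x * IZR (y j))).
  unfold Cmul; cbn [fst snd]. f_equal; ring.
Qed.

Lemma pair_coef_norm2 n a : RsumL (pairs n) (fun p => Cnorm2 (pair_coef a p)) = norm2 n a ^ 2.
Proof.
  unfold pairs, pair_coef. rewrite RsumL_prod. cbn [fst snd].
  setoid_rewrite Cnorm2_mul. setoid_rewrite RsumL_scal. rewrite RsumL_scal_r.
  unfold norm2, Rsum. fold (RsumL (seq 0 n) (fun i => Cnorm2 (a i))). ring.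
Qed.

(* Duality: sum_x |S(x)|^4 = sum_(i,j) conj(a_i a_j) W(y_i + y_j) with c_x = conj (S(x)^2),
   hence it is at most sum_(i,j) |a_i a_j| |W(y_i + y_j)|. *)
Lemma fourth_moment_duality X n a y :
  RsumL X (fun x => Cnorm2 (expsum n a y x) ^ 2)
  <= RsumL (pairs n) (fun p => Cabs (pair_coef a p) *
       Cabs (dual_sum X (fun x => Cconj (Cmul (expsum n a y x) (expsum n a y x))) (pair_freq y p))).
Proof.
  set (U := fun x => Cmul (expsum n a y x) (expsum n a y x)).
  transitivity (RsumL (pairs n) (fun p =>
    dot (Cconj (pair_coef a p)) (dual_sum X (fun x => Cconj (U x)) (pair_freq y p)))).
  - right. rewrite (RsumL_ext X _ (fun x => RsumL (pairs n) (fun p =>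
      dot (Cconj (pair_coef a p)) (Cmul (Cconj (U x)) (e (x * IZR (pair_freq y p))))))).
    + rewrite RsumL_swap. apply RsumL_ext; intros p _. unfold dual_sum.
      rewrite dot_CsumL_r. reflexivity.
    + intros x _.
      replace (Cnorm2 (expsum n a y x) ^ 2) with (Cnorm2 (U x))
        by (unfold U; rewrite Cnorm2_mul; ring).
      rewrite Cnorm2_dot.
      unfold U at 2. rewrite expsum_square, dot_CsumL_r.
      apply RsumL_ext; intros p _. apply dot_conj.
  - apply RsumL_le; intros p _. eapply Rle_trans; [apply dot_le|].
    rewrite Cabs_conj. apply Rle_refl.
Qed.

Lemma sum_indicator (K : list Z) (z : Z) (f : Z -> R) :
  NoDup K -> In z K -> RsumL K (fun k => (if Z.eqb z k then 1 else 0) * f k) = f z.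
Proof.
  induction K as [|k K IH]; intros Hnd Hin; [destruct Hin|].
  apply NoDup_cons_iff in Hnd as [Hk Hnd]. rewrite RsumL_cons.
  destruct (Z.eqb_spec z k) as [->|Hne].
  - rewrite (RsumL_ext K _ (fun _ => 0)), RsumL_const; [ring|].
    intros k' Hk'. destruct (Z.eqb_spec k k'); [subst; contradiction|ring].
  - destruct Hin as [->|Hin]; [congruence|]. rewrite IH; auto. ring.
Qed.

Lemma count_sum {A} (l : list A) (z : A -> Z) (K : list Z) (f : Z -> R) :
  NoDup K -> (forall p, In p l -> In (z p) K) ->
  RsumL l (fun p => f (z p))
  = RsumL K (fun k => INR (length (filter (fun p => Z.eqb (z p) k) l)) * f k).
Proof.
  intros HK. induction l as [|p l IH]; intros Hin.
  - rewrite (RsumL_ext K _ (fun _ => 0)), RsumL_const; [cbn; ring|]. intros; cbn; ring.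
  - rewrite RsumL_cons, IH by (intros; apply Hin, in_cons; auto).
    rewrite <- (sum_indicator K (z p) f HK (Hin p (in_eq p l))), <- RsumL_plus.
    apply RsumL_ext. intros k _. cbn [filter].
    destruct (Z.eqb (z p) k); cbn [length]; rewrite ?S_INR; ring.
Qed.

Lemma pairs_to_window n y (f : Z -> R) (K : list Z) supA :
  NoDup K -> (forall p, In p (pairs n) -> In (pair_freq y p) K) ->
  (forall k, 0 <= f k) -> (forall k, INR (A_Y n y k) <= supA) ->
  RsumL (pairs n) (fun p => f (pair_freq y p)) <= supA * RsumL K f.
Proof.
  intros HK Hin Hf HA. rewrite (count_sum (pairs n) (pair_freq y) K f HK Hin), <- RsumL_scal.
  apply RsumL_le; intros k _. apply Rmult_le_compat_r; auto. apply HA.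
Qed.

Lemma le_of_sq_le_mul Q B : 0 <= Q -> 0 <= B -> Q ^ 2 <= B * Q -> Q <= B.
Proof. intros HQ HB H. destruct (Req_dec Q 0) as [->|HQ0]; [lra|]. nra. Qed.

(* The squared estimate implies the stated one (sqrt of a negative number is 0). *)
Lemma sqrt_form_of_square L A B C Na : 0 <= L -> 0 <= B -> 0 <= C -> 0 <= Na ->
  L ^ 2 <= PI ^ 2 * A * B * C * Na ^ 2 -> L <= PI * sqrt A * sqrt B * sqrt C * Na.
Proof.
  intros HL HB HC HNa Hsq. pose proof PI_RGT_0.
  assert (Hrhs : 0 <= PI * sqrt A * sqrt B * sqrt C * Na).
  { apply Rmult_le_pos; [|exact HNa]. apply Rmult_le_pos; [|apply sqrt_pos].
    apply Rmult_le_pos; [|apply sqrt_pos]. apply Rmult_le_pos; [lra|apply sqrt_pos]. }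
  destruct (Rlt_le_dec A 0) as [HA|HA].
  - assert (0 <= PI ^ 2 * B * C * Na ^ 2).
    { apply Rmult_le_pos; [|apply pow2_ge_0]. apply Rmult_le_pos; [|exact HC].
      apply Rmult_le_pos; [apply pow2_ge_0|exact HB]. }
    assert (L ^ 2 <= 0) by nra. assert (L = 0) by nra. lra.
  - apply Rsqr_incr_0_var; [|exact Hrhs]. unfold Rsqr.
    replace (PI * sqrt A * sqrt B * sqrt C * Na * (PI * sqrt A * sqrt B * sqrt C * Na))
      with (PI ^ 2 * (sqrt A * sqrt A) * (sqrt B * sqrt B) * (sqrt C * sqrt C) * Na ^ 2)
      by ring.
    rewrite !sqrt_sqrt by auto. nra.
Qed.

Lemma sieve_constant_bound delta P Delta (R : nat) : 0 < delta -> 0 < P ->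
  (1 <= R)%nat -> INR R <= Delta ->
  (2 * P + 2) * (INR (2 * R + Z.to_nat (up (2 / delta)))
                 + 48 / (11 * delta ^ 2) / INR (Z.to_nat (up (2 / delta))))
  <= PI ^ 2 * (Delta + 1 / delta) * (P + 2).
Proof.
  intros Hd HP HR HRD. pose proof PI_gt_3.
  set (u := 1 / delta). assert (Hu : 0 < u) by (apply Rdiv_lt_0_compat; lra).
  replace (2 / delta) with (2 * u) by (unfold u; field; lra).
  pose proof (archimed (2 * u)) as [Hup Hup'].
  assert (HupZ : (1 <= up (2 * u))%Z) by (assert (0 < up (2 * u))%Z by (apply lt_IZR; lra); lia).
  rewrite plus_INR, mult_INR, (INR_IZR_INZ (Z.to_nat (up (2 * u)))), Z2Nat.id by lia.
  cbn [INR].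
  assert (HR1 : 1 <= INR R) by (apply (le_INR 1); lia).
  assert (Htail : 48 / (11 * delta ^ 2) / IZR (up (2 * u)) <= 24 / 11 * u).
  { apply Rmult_le_reg_r with (IZR (up (2 * u))); [lra|].
    unfold Rdiv at 1. rewrite Rmult_assoc, Rinv_l, Rmult_1_r by lra.
    replace (48 / (11 * delta ^ 2)) with (24 / 11 * u * (2 * u)) by (unfold u; field; lra).
    apply Rmult_le_compat_l; [|lra]. apply Rmult_le_pos; lra. }
  apply Rle_trans with ((2 * P + 2) * (3 * INR R + 46 / 11 * u)).
  - apply Rmult_le_compat_l; lra.
  - apply Rle_trans with (9 * (Delta + u) * (P + 2)); [nra|].
    apply Rmult_le_compat_r; [lra|]. apply Rmult_le_compat_r; nra.
Qed.

Lemma argmin (y : nat -> Z) (n : nat) : (1 <= n)%nat ->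
  exists i0, (i0 < n)%nat /\ forall i, (i < n)%nat -> (y i0 <= y i)%Z.
Proof.
  induction n as [|n IH]; intros Hn; [lia|]. destruct (Nat.eq_dec n 0) as [->|Hn0].
  - exists 0%nat. split; [lia|]. intros i Hi. replace i with 0%nat by lia. lia.
  - destruct IH as [i0 [Hi0 Hmin]]; [lia|].
    destruct (Z_le_gt_dec (y i0) (y n)).
    + exists i0. split; [lia|]. intros i Hi.
      destruct (Nat.eq_dec i n) as [->|]; auto. apply Hmin; lia.
    + exists n. split; [lia|]. intros i Hi.
      destruct (Nat.eq_dec i n) as [->|]; [lia|]. specialize (Hmin i ltac:(lia)). lia.
Qed.

Lemma argmax (y : nat -> Z) (n : nat) : (1 <= n)%nat ->
  exists i1, (i1 < n)%nat /\ forall i, (i < n)%nat -> (y i <= y i1)%Z.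
Proof.
  intros Hn. destruct (argmin (fun i => (- y i)%Z) n Hn) as [i1 [H1 H2]].
  exists i1. split; auto. intros i Hi. specialize (H2 i Hi). lia.
Qed.
(** * Cells of a spacing-delta grid *)

Definition rnd (t : R) : Z := Zfloor (t + 1/2).
Definition frac_c (t : R) : R := t - IZR (rnd t).
(* index of the cell of length delta, centred at a multiple of delta, containing frac_c t *)
Definition cell (delta t : R) : Z := Zfloor (frac_c t / delta + 1/2).

Lemma frac_c_range t : -1/2 <= frac_c t < 1/2.
Proof. unfold frac_c, rnd. pose proof (Zfloor_bound (t + 1/2)). lra. Qed.

Lemma floor_eq_close delta c s1 s2 : 0 < delta ->
  Zfloor (s1 / delta + c) = Zfloor (s2 / delta + c) -> Rabs (s1 - s2) < delta.
Proof.
  intros Hd Heq.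
  pose proof (Zfloor_bound (s1 / delta + c)) as B1.
  pose proof (Zfloor_bound (s2 / delta + c)) as B2. rewrite Heq in B1.
  assert (Hlt : Rabs (s1 / delta - s2 / delta) < 1) by (apply Rabs_def1; lra).
  replace (s1 / delta - s2 / delta) with ((s1 - s2) * / delta) in Hlt by (field; lra).
  rewrite Rabs_mult, (Rabs_pos_eq (/ delta)) in Hlt by (left; apply Rinv_0_lt_compat; lra).
  apply (Rmult_lt_compat_r delta) in Hlt; [|lra].
  rewrite Rmult_assoc, Rinv_l in Hlt by lra. lra.
Qed.

Lemma abs_ge_of_round v : IZR (Z.abs (rnd v)) - 1/2 <= Rabs v.
Proof.
  unfold rnd. pose proof (Zfloor_bound (v + 1/2)) as B.
  set (m := Zfloor (v + 1/2)) in *. rewrite abs_IZR.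
  destruct (Z_le_gt_dec 0 m) as [Hm|Hm].
  - apply IZR_le in Hm. rewrite Rabs_pos_eq by lra.
    apply Rle_trans with v; [lra|apply Rle_abs].
  - assert (Hm1 : IZR m <= -1) by (apply IZR_le; lia).
    rewrite Rabs_left by lra. rewrite <- Rabs_Ropp. eapply Rle_trans; [|apply Rle_abs]. lra.
Qed.

Lemma cell_bound delta t : 0 < delta -> (Z.abs (cell delta t) <= up (1 / delta))%Z.
Proof.
  intros Hd. unfold cell.
  pose proof (frac_c_range t) as Hu.
  pose proof (Zfloor_bound (frac_c t / delta + 1/2)) as B.
  set (m := Zfloor (frac_c t / delta + 1/2)) in *.
  assert (Hr : 0 < / delta) by (apply Rinv_0_lt_compat; lra).
  pose proof (archimed (1 / delta)) as [Hup _]. unfold Rdiv in *.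
  rewrite Rmult_1_l in Hup |- *.
  assert (Hup1 : 1 <= IZR (up (/ delta))).
  { apply IZR_le. assert (0 < up (/ delta))%Z by (apply lt_IZR; lra). lia. }
  assert (Hud : Rabs (frac_c t * / delta) <= / 2 * / delta).
  { rewrite Rabs_mult, (Rabs_pos_eq (/ delta)) by lra.
    apply Rmult_le_compat_r; [lra|]. apply Rabs_le; lra. }
  pose proof (Rle_abs (frac_c t * / delta)) as Hpos.
  pose proof (Rle_abs (- (frac_c t * / delta))) as Hneg. rewrite Rabs_Ropp in Hneg.
  assert (Hlo : - IZR (up (/ delta)) < IZR m) by lra.
  assert (Hhi : IZR m < IZR (up (/ delta))) by lra.
  rewrite <- opp_IZR in Hlo. apply lt_IZR in Hlo, Hhi. lia.
Qed.

(* The kernel majorant: A0 on the central cell, 4 / (11 dist^2) on the others. *)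
Definition decay_profile (A0 delta : R) (m : Z) : R :=
  if Z.eqb m 0 then A0 else 4 / (11 * ((IZR (Z.abs m) - 1/2) * delta) ^ 2).

Lemma decay_profile_nonneg A0 delta m : 0 <= A0 -> 0 < delta -> 0 <= decay_profile A0 delta m.
Proof.
  intros HA Hd. unfold decay_profile. destruct (Z.eqb_spec m 0) as [_|Hm]; auto.
  assert (1 <= IZR (Z.abs m)) by (apply IZR_le; lia).
  assert (0 < (IZR (Z.abs m) - 1/2) * delta) by (apply Rmult_lt_0_compat; lra).
  apply Rlt_le, Rdiv_lt_0_compat; [lra|]. apply Rmult_lt_0_compat; [lra|]. apply pow_lt; auto.
Qed.

Lemma kernel_le_profile (g : R -> R) A0 delta t : 0 < delta ->
  (forall t, g t <= A0) -> (forall t, g t * chord2 t <= 4) -> (forall t, 0 <= g t) ->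
  g t <= decay_profile A0 delta (cell delta t).
Proof.
  intros Hd HgA Hgc Hg0. unfold decay_profile.
  destruct (Z.eqb_spec (cell delta t) 0) as [_|Hm]; [apply HgA|].
  set (u := frac_c t). set (w := (IZR (Z.abs (cell delta t)) - 1/2) * delta).
  assert (Hw : 0 < w).
  { assert (1 <= IZR (Z.abs (cell delta t))) by (apply IZR_le; lia).
    apply Rmult_lt_0_compat; lra. }
  assert (Hwu : w <= Rabs u).
  { pose proof (abs_ge_of_round (u / delta)) as Hr.
    unfold Rdiv in Hr. rewrite Rabs_mult, (Rabs_pos_eq (/ delta)) in Hr
      by (left; apply Rinv_0_lt_compat; lra).
    apply (Rmult_le_compat_r delta) in Hr; [|lra].
    rewrite Rmult_assoc, Rinv_l, Rmult_1_r in Hr by lra. exact Hr. }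
  assert (Hchord : 11 * w ^ 2 <= chord2 t).
  { pose proof (frac_c_range t) as Hu. fold u in Hu.
    rewrite <- (chord2_period t (rnd t)). change (t - IZR (rnd t)) with u.
    eapply Rle_trans; [|apply chord2_lower; lra].
    assert (Hsq : w ^ 2 <= u ^ 2).
    { rewrite <- (pow2_abs u). apply pow_incr; lra. }
    lra. }
  apply Rmult_le_reg_r with (11 * w ^ 2); [nra|].
  unfold Rdiv. rewrite Rmult_assoc, Rinv_l, Rmult_1_r by nra.
  apply Rle_trans with (g t * chord2 t); [apply Rmult_le_compat_l|]; auto.
Qed.

Lemma profile_step_ineq m : 0 <= m ->
  4 / (2 * m + 1) ^ 2 + 12 * m / (2 * m + 1) <= 12 * (m + 1) / (2 * m + 3).
Proof.
  intros Hm.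
  assert (E : 4 / (2 * m + 1) ^ 2 + 12 * m / (2 * m + 1) - 12 * (m + 1) / (2 * m + 3)
              = - (16 * m / ((2 * m + 1) ^ 2 * (2 * m + 3)))) by (field; lra).
  assert (0 <= 16 * m / ((2 * m + 1) ^ 2 * (2 * m + 3))).
  { apply Rle_mult_inv_pos; [lra|]. apply Rmult_lt_0_compat; [apply pow_lt|]; lra. }
  lra.
Qed.

Lemma sum_profile A0 delta M : 0 < delta ->
  RsumL (sym_range M) (decay_profile A0 delta)
  <= A0 + 8 / (11 * delta ^ 2) * (12 * INR M / (2 * INR M + 1)).
Proof.
  intros Hd. assert (HK : 0 < 8 / (11 * delta ^ 2)) by (apply Rdiv_lt_0_compat; nra).
  set (K := 8 / (11 * delta ^ 2)) in *.
  induction M as [|M IH].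
  - cbn. unfold decay_profile. cbn. lra.
  - cbn [sym_range]. rewrite !RsumL_cons.
    assert (Hedge : forall z, Z.abs z = Z.of_nat (S M) ->
              decay_profile A0 delta z = K * (2 / (2 * INR M + 1) ^ 2)).
    { intros z Hz. unfold decay_profile.
      replace (Z.eqb z 0) with false by (symmetry; apply Z.eqb_neq; lia).
      rewrite Hz, <- INR_IZR_INZ, S_INR. pose proof (pos_INR M). unfold K. field. lra. }
    rewrite !Hedge by lia. rewrite S_INR. pose proof (pos_INR M) as HM.
    replace (2 * (INR M + 1) + 1) with (2 * INR M + 3) by ring.
    pose proof (profile_step_ineq (INR M) HM) as Hstep.
    apply (Rmult_le_compat_l K) in Hstep; [|lra].
    replace (K * (4 / (2 * INR M + 1) ^ 2 + 12 * INR M / (2 * INR M + 1)))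
      with (K * (2 / (2 * INR M + 1) ^ 2) + K * (2 / (2 * INR M + 1) ^ 2)
            + K * (12 * INR M / (2 * INR M + 1))) in Hstep by (field; lra).
    lra.
Qed.

Lemma sum_profile_le A0 delta M : 0 < delta ->
  RsumL (sym_range M) (decay_profile A0 delta) <= A0 + 48 / (11 * delta ^ 2).
Proof.
  intros Hd. eapply Rle_trans; [apply sum_profile; auto|]. pose proof (pos_INR M).
  assert (12 * INR M / (2 * INR M + 1) <= 6).
  { apply Rmult_le_reg_r with (2 * INR M + 1); [lra|].
    unfold Rdiv. rewrite Rmult_assoc, Rinv_l by lra. lra. }
  assert (0 < 8 / (11 * delta ^ 2)) by (apply Rdiv_lt_0_compat; nra).
  replace (48 / (11 * delta ^ 2)) with (8 / (11 * delta ^ 2) * 6) by (field; lra).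
  apply Rplus_le_compat_l, Rmult_le_compat_l; lra.
Qed.

(** * Delta-spaced sets: point counts, dual large sieve, fourth moment *)

Section SpacedSet.

Variables (delta P : R) (X : list R).
Hypothesis delta_pos : 0 < delta.
Hypothesis P_pos : 0 < P.
Hypothesis X_nodup : NoDup X.
Hypothesis X_spaced :
  forall x1 x2, In x1 X -> In x2 X -> x1 <> x2 -> delta <= Rabs (x1 - x2).
Hypothesis X_bounded : forall x, In x X -> -P <= x <= P.

Lemma spaced_close_eq x1 x2 : In x1 X -> In x2 X -> Rabs (x1 - x2) < delta -> x1 = x2.
Proof.
  intros H1 H2 Hlt. destruct (Req_dec x1 x2) as [|Hne]; auto.
  pose proof (X_spaced x1 x2 H1 H2 Hne). lra.
Qed.

(* each cell [k delta, (k + 1) delta) - P holds at most one point: N <= 2P / delta + 1 *)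
Lemma spaced_card_bound : INR (length X) <= 2 * P / delta + 1.
Proof.
  set (K := Zfloor (2 * P / delta)).
  assert (Hdiv : forall s, 0 <= s -> 0 <= s / delta) by (intros; apply Rle_mult_inv_pos; lra).
  assert (Hcount : RsumL X (fun x => (fun _ : Z => 1) (Zfloor (x / delta + P / delta)))
                   <= RsumL (zrange 0 (Z.to_nat (K + 1))) (fun _ => 1)).
  { apply (RsumL_injective_le X _ (fun x => Zfloor (x / delta + P / delta)) (fun _ => 1)).
    - exact X_nodup.
    - intros x1 x2 H1 H2 Heq. apply spaced_close_eq; auto.
      apply (floor_eq_close delta (P / delta)); auto.
    - intros x Hx. pose proof (X_bounded x Hx). apply In_zrange.
      assert (0 <= Zfloor (x / delta + P / delta))%Z.
      { apply Zfloor_lub. replace (x / delta + P / delta) with ((x + P) / delta) by (field; lra).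
        apply Hdiv. lra. }
      assert (Zfloor (x / delta + P / delta) <= K)%Z.
      { apply Zfloor_le. replace (x / delta + P / delta) with ((x + P) / delta) by (field; lra).
        unfold Rdiv. apply Rmult_le_compat_r; [left; apply Rinv_0_lt_compat|]; lra. }
      lia.
    - intros; lra. }
  cbv beta in Hcount. rewrite !RsumL_const, length_zrange, Rmult_1_r, Rmult_1_r in Hcount.
  assert (HK0 : (0 <= K)%Z) by (apply Zfloor_lub, Hdiv; lra).
  rewrite (INR_IZR_INZ (Z.to_nat (K + 1))), Z2Nat.id, plus_IZR in Hcount by lia.
  pose proof (Zfloor_bound (2 * P / delta)) as HK. fold K in HK. lra.
Qed.

Lemma cell_index_injective x x1 x2 : In x1 X -> In x2 X ->
  (rnd (x1 - x), cell delta (x1 - x)) = (rnd (x2 - x), cell delta (x2 - x)) -> x1 = x2.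
Proof.
  intros H1 H2 Heq. injection Heq as Hj Hm. apply spaced_close_eq; auto.
  replace (x1 - x2) with (frac_c (x1 - x) - frac_c (x2 - x)) by (unfold frac_c; rewrite Hj; ring).
  apply (floor_eq_close delta (1/2)); auto.
Qed.

(* Row sums of a kernel g with g <= A0 and g(t) |e(t) - 1|^2 <= 4: each of the
   <= 2P + 2 unit intervals met by X - x contributes at most the profile sum. *)
Lemma row_sum_bound (x A0 : R) (g : R -> R) :
  -P <= x <= P -> 0 <= A0 ->
  (forall t, 0 <= g t) -> (forall t, g t <= A0) -> (forall t, g t * chord2 t <= 4) ->
  RsumL X (fun x' => g (x' - x)) <= (2 * P + 2) * (A0 + 48 / (11 * delta ^ 2)).
Proof.
  intros Hx HA0 Hg0 HgA Hgc.
  set (J0 := rnd (- P - x)). set (J1 := rnd (P - x)).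
  assert (HJ : (J0 <= J1)%Z) by (apply Zfloor_le; lra).
  set (Js := zrange J0 (Z.to_nat (J1 - J0 + 1))).
  set (Ms := sym_range (Z.to_nat (up (1 / delta)))).
  apply Rle_trans with (RsumL X (fun x' => decay_profile A0 delta (cell delta (x' - x)))).
  { apply RsumL_le; intros x' _. apply kernel_le_profile; auto. }
  eapply Rle_trans.
  { apply (RsumL_injective_le X (list_prod Js Ms)
      (fun x' => (rnd (x' - x), cell delta (x' - x))) (fun b => decay_profile A0 delta (snd b))).
    - exact X_nodup.
    - intros x1 x2 H1 H2. apply cell_index_injective; auto.
    - intros x' Hx'. apply in_prod.
      + apply In_zrange. pose proof (X_bounded x' Hx').
        assert (J0 <= rnd (x' - x) <= J1)%Z by (split; apply Zfloor_le; lra). lia.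
      + apply In_sym_range. pose proof (cell_bound delta (x' - x) delta_pos) as Hc.
        pose proof (archimed (1 / delta)) as [Hup _].
        assert (0 < IZR (up (1 / delta))) by (assert (0 < 1 / delta) by
          (apply Rdiv_lt_0_compat; lra); lra).
        apply lt_IZR in H. lia.
    - intros; apply decay_profile_nonneg; auto. }
  rewrite RsumL_prod, (RsumL_ext Js _ (fun _ => RsumL Ms (decay_profile A0 delta)))
    by reflexivity.
  rewrite RsumL_const. unfold Js. rewrite length_zrange.
  apply Rmult_le_compat.
  - apply pos_INR.
  - apply RsumL_nonneg. intros; apply decay_profile_nonneg; auto.
  - rewrite INR_IZR_INZ, Z2Nat.id, plus_IZR, minus_IZR by lia.
    pose proof (Zfloor_bound (- P - x + 1/2)). pose proof (Zfloor_bound (P - x + 1/2)).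
    unfold J0, J1, rnd in *. lra.
  - apply sum_profile_le; auto.
Qed.


Lemma spaced_delta_le : (2 <= length X)%nat -> delta <= 2 * P.
Proof.
  intros Hlen. destruct X as [|x1 [|x2 X']]; cbn in Hlen; try lia.
  assert (Hne : x1 <> x2).
  { intros ->. apply NoDup_cons_iff in X_nodup as [Hn _]. apply Hn. left; reflexivity. }
  pose proof (X_spaced x1 x2 (in_eq _ _) (in_cons _ _ _ (in_eq _ _)) Hne).
  pose proof (X_bounded x1 (in_eq _ _)). pose proof (X_bounded x2 (in_cons _ _ _ (in_eq _ _))).
  apply Rle_trans with (Rabs (x1 - x2)); auto. apply Rabs_le. lra.
Qed.

Lemma dual_large_sieve (c : R -> Cpx) (lo : Z) (m H : nat) :
  INR H * RsumL (zrange lo (S m)) (fun k => Cnorm2 (dual_sum X c k))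
  <= (2 * P + 2) * (INR H * INR (m + H) + 48 / (11 * delta ^ 2))
     * RsumL X (fun x => Cnorm2 (c x)).
Proof.
  eapply Rle_trans; [apply window_average; intros; apply Cnorm2_nonneg|].
  rewrite window_sum_expand.
  set (g := fun t => Cabs (window_kernel lo H (m + H) t)).
  assert (HA0 : 0 <= INR H * INR (m + H)) by (apply Rmult_le_pos; apply pos_INR).
  apply (schur_test X c g); [intros; apply Rle_refl| |].
  - intros x Hx. apply row_sum_bound; auto; intros t; unfold g.
    + apply Cabs_nonneg.
    + apply window_kernel_trivial_bound.
    + apply window_kernel_chord_bound.
  - intros x' Hx'. rewrite (RsumL_ext X _ (fun x => (fun s => g (- s)) (x - x')))
      by (intros; cbv beta; f_equal; ring).
    apply (row_sum_bound x' _ (fun s => g (- s))); auto; intros t; unfold g.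
    + apply Cabs_nonneg.
    + apply window_kernel_trivial_bound.
    + rewrite <- chord2_even. apply window_kernel_chord_bound.
Qed.

Lemma fourth_moment_bound n a y supA (lo : Z) (m H : nat) :
  (forall i j, (i < n)%nat -> (j < n)%nat -> (lo <= y i + y j <= lo + Z.of_nat m)%Z) ->
  (forall k, INR (A_Y n y k) <= supA) -> (1 <= H)%nat ->
  RsumL X (fun x => Cnorm2 (expsum n a y x) ^ 2)
  <= norm2 n a ^ 2 * supA
     * ((2 * P + 2) * (INR (m + H) + 48 / (11 * delta ^ 2) / INR H)).
Proof.
  intros Hy HA HH.
  set (Q := RsumL X (fun x => Cnorm2 (expsum n a y x) ^ 2)).
  set (c := fun x => Cconj (Cmul (expsum n a y x) (expsum n a y x))).
  set (W := fun p => Cabs (dual_sum X c (pair_freq y p))).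
  set (Lam := (2 * P + 2) * (INR (m + H) + 48 / (11 * delta ^ 2) / INR H)).
  assert (HsA : 0 <= supA) by (eapply Rle_trans; [apply pos_INR|apply (HA 0%Z)]).
  assert (HHpos : 0 < INR H) by (apply lt_0_INR; lia).
  assert (HLam : 0 <= Lam).
  { apply Rmult_le_pos; [lra|]. apply Rplus_le_le_0_compat; [apply pos_INR|].
    apply Rle_mult_inv_pos; [|lra]. apply Rle_mult_inv_pos; [lra|]. nra. }
  assert (HQ0 : 0 <= Q) by (apply RsumL_nonneg; intros; apply pow2_ge_0).
  assert (Hc : RsumL X (fun x => Cnorm2 (c x)) = Q).
  { apply RsumL_ext; intros x _. unfold c. rewrite Cnorm2_conj, Cnorm2_mul. ring. }
  assert (Hpairs : Q ^ 2 <= norm2 n a ^ 2 * RsumL (pairs n) (fun p => W p ^ 2)).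
  { pose proof (RsumL_CS (pairs n) (fun p => Cabs (pair_coef a p)) W) as HCS. cbv beta in HCS.
    rewrite (RsumL_ext _ (fun p => Cabs (pair_coef a p) ^ 2) (fun p => Cnorm2 (pair_coef a p))),
      pair_coef_norm2 in HCS by (intros; apply Cabs_pow2).
    eapply Rle_trans; [|exact HCS].
    apply pow_incr. split; [exact HQ0|apply fourth_moment_duality]. }
  assert (Hgroup : RsumL (pairs n) (fun p => W p ^ 2)
                   <= supA * RsumL (zrange lo (S m)) (fun k => Cnorm2 (dual_sum X c k))).
  { rewrite (RsumL_ext _ _ (fun p => Cnorm2 (dual_sum X c (pair_freq y p))))
      by (intros; apply Cabs_pow2).
    apply (pairs_to_window n y (fun k => Cnorm2 (dual_sum X c k)));
      auto using NoDup_zrange, Cnorm2_nonneg.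
    intros [i j] Hp. apply in_prod_iff in Hp as [Hi Hj]. apply in_seq in Hi, Hj.
    apply In_zrange. unfold pair_freq; cbn [fst snd].
    specialize (Hy i j ltac:(lia) ltac:(lia)). lia. }
  assert (Hsieve : RsumL (zrange lo (S m)) (fun k => Cnorm2 (dual_sum X c k)) <= Lam * Q).
  { apply Rmult_le_reg_l with (INR H); auto.
    eapply Rle_trans; [apply dual_large_sieve|]. rewrite Hc. unfold Lam.
    right. field. lra. }
  apply le_of_sq_le_mul; auto.
  - apply Rmult_le_pos; [apply Rmult_le_pos; [apply pow2_ge_0|exact HsA]|exact HLam].
  - eapply Rle_trans; [exact Hpairs|].
    replace (norm2 n a ^ 2 * supA * Lam * Q) with (norm2 n a ^ 2 * (supA * (Lam * Q))) by ring.
    apply Rmult_le_compat_l; [apply pow2_ge_0|]. eapply Rle_trans; [exact Hgroup|].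
    apply Rmult_le_compat_l; auto.
Qed.

(* A single frequency: S(x) = e(x y0) sum_i a_i, so |S(x)|^2 <= n ||a||^2 while A_Y(2 y0) = n^2. *)
Lemma single_frequency_bound n a y supA y0 :
  (2 <= length X)%nat -> (forall i, (i < n)%nat -> y i = y0) ->
  (forall k, INR (A_Y n y k) <= supA) ->
  (RsumL X (fun x => Cnorm2 (expsum n a y x))) ^ 2
  <= 9 * (INR (length X) / delta) * (P + 2) * supA * norm2 n a ^ 2.
Proof.
  intros Hlen Hy HA. set (N := INR (length X)). set (C := Cnorm2 (CsumL (seq 0 n) a)).
  assert (HN : 0 <= N) by apply pos_INR.
  assert (Hsum : RsumL X (fun x => Cnorm2 (expsum n a y x)) = N * C).
  { rewrite (RsumL_ext X _ (fun _ => C)), RsumL_const; [reflexivity|].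
    intros x _. unfold expsum.
    rewrite (CsumL_ext _ _ (fun i => Cmul (a i) (e (x * IZR y0))))
      by (intros i Hi; apply in_seq in Hi; rewrite Hy by lia; reflexivity).
    rewrite <- Cmul_CsumL_l, Cnorm2_mul, e_norm. unfold C. ring. }
  assert (HC : C <= INR n * norm2 n a).
  { unfold C. pose proof (Cnorm2_CsumL_le (seq 0 n) a) as H. rewrite length_seq in H. exact H. }
  assert (HC0 : 0 <= C) by apply Cnorm2_nonneg.
  assert (HsupA : INR n ^ 2 <= supA).
  { eapply Rle_trans; [|apply (HA (2 * y0)%Z)]. right. unfold A_Y.
    rewrite forallb_filter_id, length_prod, length_seq, mult_INR; [ring|].
    apply forallb_forall. intros [i j] Hp.
    apply in_prod_iff in Hp as [Hi Hj]. apply in_seq in Hi, Hj.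
    cbn [fst snd]. rewrite (Hy i), (Hy j) by lia. apply Z.eqb_eq. lia. }
  assert (HNd : N * delta <= 9 * (P + 2)).
  { pose proof spaced_card_bound as Hcard. pose proof (spaced_delta_le Hlen).
    apply (Rmult_le_compat_r delta) in Hcard; [|lra].
    replace ((2 * P / delta + 1) * delta) with (2 * P + delta) in Hcard by (field; lra).
    fold N in Hcard. lra. }
  rewrite Hsum. pose proof (norm2_nonneg n a). pose proof (pos_INR n).
  apply Rle_trans with (N * delta * (N / delta) * (INR n ^ 2 * norm2 n a ^ 2)).
  - replace (N * delta * (N / delta)) with (N * N) by (field; lra).
    replace ((N * C) ^ 2) with (N * N * C ^ 2) by ring.
    apply Rmult_le_compat_l; [nra|].
    replace (INR n ^ 2 * norm2 n a ^ 2) with ((INR n * norm2 n a) ^ 2) by ring.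
    apply pow_incr; lra.
  - assert (0 <= N / delta) by (apply Rle_mult_inv_pos; lra).
    assert (0 <= norm2 n a ^ 2) by apply pow2_ge_0.
    replace (9 * (N / delta) * (P + 2) * supA * norm2 n a ^ 2)
      with (9 * (P + 2) * (N / delta) * (supA * norm2 n a ^ 2)) by ring.
    apply Rmult_le_compat.
    + apply Rmult_le_pos; [apply Rmult_le_pos|]; lra.
    + apply Rmult_le_pos; [apply pow2_ge_0|lra].
    + apply Rmult_le_compat_r; lra.
    + apply Rmult_le_compat_r; lra.
Qed.

(* Spread frequencies, 1 <= R <= Delta with all y_i + y_j in {lo, ..., lo + 2R}:
   Cauchy-Schwarz over X, the fourth-moment bound with H = ceil (2 / delta), and
   the bound on the sieve constant. *)
Lemma spread_frequencies_bound n a y supA Delta (lo : Z) (R : nat) :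
  (1 <= R)%nat -> INR R <= Delta ->
  (forall i j, (i < n)%nat -> (j < n)%nat -> (lo <= y i + y j <= lo + Z.of_nat (2 * R))%Z) ->
  (forall k, INR (A_Y n y k) <= supA) ->
  (RsumL X (fun x => Cnorm2 (expsum n a y x))) ^ 2
  <= PI ^ 2 * (INR (length X) * Delta + INR (length X) / delta) * (P + 2) * supA * norm2 n a ^ 2.
Proof.
  intros HR HRD Hy HA.
  set (H := Z.to_nat (up (2 / delta))).
  assert (HH : (1 <= H)%nat).
  { assert (0 < 2 / delta) by (apply Rdiv_lt_0_compat; lra).
    pose proof (archimed (2 / delta)) as [Hup _].
    assert (0 < up (2 / delta))%Z by (apply lt_IZR; lra). unfold H. lia. }
  pose proof (fourth_moment_bound n a y supA lo (2 * R) H Hy HA HH) as HQ.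
  pose proof (sieve_constant_bound delta P Delta R delta_pos P_pos HR HRD) as HLam. fold H in HLam.
  pose proof (RsumL_sq_le X (fun x => Cnorm2 (expsum n a y x))) as HCS.
  assert (HsA : 0 <= supA) by (eapply Rle_trans; [apply pos_INR|apply (HA 0%Z)]).
  assert (0 <= norm2 n a ^ 2 * supA) by (apply Rmult_le_pos; [apply pow2_ge_0|exact HsA]).
  eapply Rle_trans; [exact HCS|].
  replace (PI ^ 2 * (INR (length X) * Delta + INR (length X) / delta) * (P + 2) * supA
           * norm2 n a ^ 2)
    with (INR (length X) * (norm2 n a ^ 2 * supA * (PI ^ 2 * (Delta + 1 / delta) * (P + 2))))
    by (field; lra).
  apply Rmult_le_compat_l; [apply pos_INR|]. eapply Rle_trans; [exact HQ|].
  apply Rmult_le_compat_l; auto.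
Qed.

Lemma squared_bound n a y Delta supA :
  (2 <= length X)%nat ->
  (forall i j, (i < n)%nat -> (j < n)%nat -> Rabs (IZR (y i - y j)) <= Delta) ->
  (forall k, INR (A_Y n y k) <= supA) ->
  (RsumL X (fun x => Cnorm2 (expsum n a y x))) ^ 2
  <= PI ^ 2 * (INR (length X) * Delta + INR (length X) / delta) * (P + 2) * supA * norm2 n a ^ 2.
Proof.
  intros Hlen HDelta HA.
  destruct (Nat.eq_dec n 0) as [->|Hn].
  { change (norm2 0 a) with 0. rewrite (RsumL_ext X _ (fun _ => 0)), RsumL_const.
    - right. ring.
    - intros; unfold expsum, Cnorm2; cbn; ring. }
  destruct (argmin y n ltac:(lia)) as [i0 [Hi0 Hmin]].
  destruct (argmax y n ltac:(lia)) as [i1 [Hi1 Hmax]].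
  set (R := Z.to_nat (y i1 - y i0)).
  assert (HRD : INR R <= Delta).
  { eapply Rle_trans; [|apply (HDelta i1 i0 Hi1 Hi0)].
    unfold R. rewrite INR_IZR_INZ, Z2Nat.id by (specialize (Hmin i1 Hi1); lia).
    apply Rle_abs. }
  destruct (Nat.eq_dec R 0) as [HR0|HR0].
  - assert (Hy : forall i, (i < n)%nat -> y i = y i0).
    { intros i Hi. specialize (Hmin i Hi). specialize (Hmax i Hi). unfold R in HR0. lia. }
    eapply Rle_trans; [apply (single_frequency_bound n a y supA (y i0)); auto|].
    pose proof PI_gt_3. pose proof (pos_INR R). pose proof (pos_INR (length X)).
    assert (HsA : 0 <= supA) by (eapply Rle_trans; [apply pos_INR|apply (HA 0%Z)]).
    assert (0 <= INR (length X) / delta) by (apply Rle_mult_inv_pos; lra).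
    pose proof (pow2_ge_0 (norm2 n a)).
    apply Rmult_le_compat_r; [lra|]. apply Rmult_le_compat_r; [lra|].
    apply Rmult_le_compat_r; [lra|]. apply Rmult_le_compat; nra.
  - apply (spread_frequencies_bound n a y supA Delta (2 * y i0) R); auto; [lia|].
    intros i j Hi Hj. pose proof (Hmin i Hi). pose proof (Hmin j Hj).
    pose proof (Hmax i Hi). pose proof (Hmax j Hj). unfold R. lia.
Qed.

End SpacedSet.

Theorem theorem1 (delta P : R) (X : list R) (n : nat) (y : nat -> Z) (a : nat -> Cpx)
  (Delta supA : R) :
  0 < delta -> 0 < P ->
  delta_spaced delta X ->
  (forall x, In x X -> -P <= x <= P) ->
  (* Delta(Y) = sup_{(i,j) in I x I} |y_i - y_j| *)
  is_lub (fun r => exists i j, (i < n)%nat /\ (j < n)%nat /\ r = Rabs (IZR (y i - y j))) Delta ->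
  (* supA = sup_{k in Z} A_Y(k) *)
  is_lub (fun r => exists k : Z, r = INR (A_Y n y k)) supA ->
  Rsum_list X (fun x => Cnorm2 (Csum n (fun i => Cmul (a i) (e (x * IZR (y i)))))) <=
  PI * sqrt (INR (length X) * Delta + INR (length X) / delta) * sqrt (P + 2)
     * sqrt supA * norm2 n a.
Proof.
  intros Hd HP [Hnd [Hlen Hsp]] HX [HDelta _] [HsupA _].
  assert (HA : forall k, INR (A_Y n y k) <= supA) by (intros k; apply HsupA; exists k; reflexivity).
  change (Rsum_list X (fun x => Cnorm2 (Csum n (fun i => Cmul (a i) (e (x * IZR (y i)))))))
    with (RsumL X (fun x => Cnorm2 (expsum n a y x))).
  apply sqrt_form_of_square.
  - apply RsumL_nonneg. intros; apply Cnorm2_nonneg.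
  - lra.
  - eapply Rle_trans; [apply pos_INR|apply (HA 0%Z)].
  - apply norm2_nonneg.
  - apply (squared_bound delta P X); auto.
    intros i j Hi Hj. apply HDelta. exists i, j. auto.
Qed.
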